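(* Let $n\ge 2$. The maximum values of the normalized Graovac-Ghorbani index and of the Graovac-Ghorbani index over the set of all connected bipartite graphs $G$ on $n$ vertices are $$\mathrm{NGG}(G) = \sqrt{\lfloor n/2\rfloor \lceil n/2\rceil} \quad\text{and}\quad \mathrm{GG}(G) = \sqrt{(n-2)\lfloor n/2\rfloor \lceil n/2\rceil},$$ respectively, and each of these values is achieved if and only if $G$ is the complete bipartite graph $K_{\lfloor n/2\rfloor, \lceil n/2\rceil}$.
   Context: All graphs are finite, simple, undirected and connected. For an edge $uv$ of a graph $G$, let $n_u = |\{w \in V(G) : d(w,u) < d(w,v)\}|$ and $n_v = |\{w \in V(G) : d(w,v) < d(w,u)\}|$, where $d$ is the shortest-path distance. The Graovac-Ghorbani index is $\mathrm{GG}(G) = \sum_{uv \in E(G)} \sqrt{\frac{n_u + n_v - 2}{n_u n_v}}$ and the normalized Graovac-Ghorbani index is $\mathrm{NGG}(G) = \sum_{uv \in E(G)} \frac{1}{\sqrt{n_u n_v}}$. *)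

From mathcomp Require Import all_boot all_order all_algebra.
Set Implicit Arguments. Unset Strict Implicit. Unset Printing Implicit Defensive.
Import Order.TTheory GRing.Theory Num.Theory.

Section GG.
Variable n : nat.
Implicit Types (e : rel 'I_n) (u v w : 'I_n).

Definition simple_graph e : Prop :=
  symmetric e /\ irreflexive e.

Definition connected_graph e : Prop := forall u v, connect e u v.

Definition bipartite_graph e : Prop :=
  exists f : 'I_n -> bool, forall u v, e u v -> f u != f v.

Fixpoint walk e (k : nat) (x y : 'I_n) : bool :=
  if k is k'.+1 then [exists z, e x z && walk e k' z y] else x == y.

(* shortest-path distance: least k with a walk of length k; in a connected
   graph on n vertices it is < n.  (Returns n if y is unreachable.) *)
Definition dist e (x y : 'I_n) : nat :=
  find (fun k => walk e k x y) (iota 0 n).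

Definition nu e (u v : 'I_n) : nat := #|[set w | dist e w u < dist e w v]|.

Local Open Scope ring_scope.

(* sums over unordered edges {u,v}, indexed by u < v *)
Definition NGG (R : rcfType) e : R :=
  \sum_(u : 'I_n) \sum_(v : 'I_n | (u < v)%N && e u v)
     (Num.sqrt ((nu e u v)%:R * (nu e v u)%:R))^-1.

Definition GG (R : rcfType) e : R :=
  \sum_(u : 'I_n) \sum_(v : 'I_n | (u < v)%N && e u v)
     Num.sqrt (((nu e u v)%:R + (nu e v u)%:R - 2) /
               ((nu e u v)%:R * (nu e v u)%:R)).

Definition is_complete_bipartite_half e : Prop :=
  exists A : {set 'I_n}, #|A| = n./2 /\
    forall u v, e u v = ((u \in A) != (v \in A)).

End GG.

(* In a connected bipartite graph no vertex is equidistant from the two ends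
   of an edge uv, so n_u + n_v = n; moreover n_u >= deg u, since u and its
   neighbours other than v are closer to u than to v.  Hence
   1/(n_u n_v) = (1/n_u + 1/n_v)/n, and summing over the edges gives
   sum 1/(n_u n_v) <= 1.  By Cauchy-Schwarz (used in the form
   2cx <= c^2 x^2 + 1), NGG <= sqrt |E| <= sqrt(floor(n/2) ceil(n/2)), as a
   bipartite graph with sides A, B has at most |A||B| edges.  Equality forces
   |E| = floor(n/2) ceil(n/2), i.e. the balanced complete bipartite graph,
   where every edge has {n_u, n_v} = {floor(n/2), ceil(n/2)}.  Finally
   GG = sqrt(n - 2) NGG. *)

From mathcomp Require Import all_boot all_order all_algebra.
From mathcomp Require Import zify ring lra.
Import Order.TTheory GRing.Theory Num.Theory.
Set Implicit Arguments. Unset Strict Implicit. Unset Printing Implicit Defensive.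

Lemma half_add_uphalf n : n./2 + uphalf n = n.
Proof. by rewrite uphalf_half addnCA addnn odd_double_half. Qed.

Lemma mul_sub_le_half_uphalf n k : k <= n -> k * (n - k) <= n./2 * uphalf n.
Proof.
move=> kn; have := half_add_uphalf n; rewrite uphalf_half.
move: (n./2) => a hn.
have : (0 <= (a%:Z - k%:Z) * (a%:Z - k%:Z))%R by rewrite -expr2 sqr_ge0.
by case: (odd n) hn => /= hn; nia.
Qed.

Lemma mul_sub_eq_half_uphalf n k : k <= n -> k * (n - k) = n./2 * uphalf n ->
  k = n./2 \/ k = uphalf n.
Proof.
move=> kn; have := half_add_uphalf n; rewrite uphalf_half.
move: (n./2) => a hn.
have [lt_ka|[k_mid|gt_k]] : k < a \/ k \in [:: a; odd n + a] \/ odd n + a < k.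
  by rewrite !inE; lia.
- nia.
- by rewrite !inE in k_mid; lia.
- nia.
Qed.

Lemma sqrt_half_uphalf_gt0 (R : rcfType) n : 1 < n ->
  (0 < Num.sqrt ((n./2)%:R * (uphalf n)%:R : R))%R.
Proof.
move=> n_gt1; have := half_add_uphalf n; rewrite uphalf_half => n_eq.
by rewrite sqrtr_gt0 -natrM ltr0n muln_gt0; apply/andP; split; case: (odd n) n_eq => /=; lia.
Qed.

Lemma sum_card_opposite (T : finType) (f : T -> bool) :
  \sum_x #|[set y | f y != f x]| = 2 * (#|[set x | f x]| * #|~: [set x | f x]|).
Proof.
rewrite (bigID f) /=.
rewrite (eq_bigr (fun _ => #|~: [set x | f x]|)); last first.
  by move=> x ->; apply: eq_card => y; rewrite !inE; case: (f y).
rewrite [X in _ + X](eq_bigr (fun _ => #|[set x | f x]|)); last first.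
  by move=> x /negbTE ->; apply: eq_card => y; rewrite !inE; case: (f y).
rewrite (eq_bigl (fun x => x \in [set y | f y])); last by move=> x; rewrite !inE.
rewrite [X in _ + X](eq_bigl (fun x => x \in ~: [set y | f y])); last by move=> x; rewrite !inE.
by rewrite !sum_nat_const mulnC addnn mul2n.
Qed.

Section Graph.
Variables (n : nat) (e : rel 'I_n).

Definition deg u := #|[set w | e u w]|.

Lemma sum_nbhd_const (V : nmodType) u (x : V) : (\sum_(v | e u v) x = x *+ deg u)%R.
Proof.
rewrite (eq_bigl (fun v => v \in [set w | e u w])); last by move=> v; rewrite inE.
by rewrite sumr_const.
Qed.

Lemma dist_le_walk k x y : walk e k x y -> dist e x y <= k.
Proof.
rewrite /dist => w; case: (ltnP k n) => [k_lt_n|n_le_k].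
  by rewrite leqNgt; apply/negP => /(before_find 0); rewrite nth_iota // add0n w.
by apply: leq_trans (find_size _ _) _; rewrite size_iota.
Qed.

Lemma dist_eq0 x y : (dist e x y == 0) = (x == y).
Proof.
have n_gt0 : 0 < n by apply: leq_ltn_trans (ltn_ord x).
rewrite /dist; have -> : iota 0 n = 0 :: iota 1 n.-1 by rewrite -[in LHS](prednK n_gt0).
by rewrite /=; case: (x == y).
Qed.

Lemma dist_refl x : dist e x x = 0.
Proof. by apply/eqP; rewrite dist_eq0. Qed.

Lemma walk_path p x : path e x p -> walk e (size p) x (last x p).
Proof.
elim: p x => [|z p IHp] x /=; first by rewrite eqxx.
by case/andP=> xz pz; apply/existsP; exists z; rewrite xz IHp.
Qed.

Lemma dist_adj x y : irreflexive e -> e x y -> dist e x y = 1.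
Proof.
move=> eirr xy; apply/eqP; rewrite eqn_leq lt0n dist_eq0.
rewrite (@dist_le_walk 1) /=; last by apply/existsP; exists y; rewrite xy eqxx.
by apply: contraTneq xy => ->; rewrite eirr.
Qed.

Hypothesis econ : connected_graph e.

Lemma walk_dist x y : walk e (dist e x y) x y.
Proof.
(* A duplicate-free path has fewer than n edges, so its length is among the
   candidates searched by dist. *)
have [p p_path ->] := connectP (econ x y).
case: (shortenP p_path) => {}p {}p_path p_uniq _.
have p_lt_n : size p < n.
  by have := max_card (mem (x :: p)); rewrite (card_uniqP p_uniq) card_ord.
have has_walk : has (fun k => walk e k x (last x p)) (iota 0 n).
  by apply/hasP; exists (size p); rewrite ?mem_iota ?walk_path.
have := nth_find 0 has_walk; move: has_walk.
by rewrite has_find size_iota => find_lt; rewrite nth_iota.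
Qed.

Lemma deg_gt0 u : 1 < n -> 0 < deg u.
Proof.
move=> n_gt1; have /card_gt0P [v] : 0 < #|[set~ u]|.
  by rewrite cardsC1 card_ord; lia.
rewrite !inE => vu; have [[|z p] /= p_path v_last] := connectP (econ u v).
  by rewrite v_last eqxx in vu.
by case/andP: p_path => uz _; apply/card_gt0P; exists z; rewrite inE.
Qed.

End Graph.

Section SymmetricSums.
Variables (n : nat) (e : rel 'I_n) (V : nmodType).
Hypotheses (esym : symmetric e) (eirr : irreflexive e).
Local Open Scope ring_scope.

Lemma sum_adj_swap (F : 'I_n -> 'I_n -> V) :
  \sum_u \sum_(v | e u v) F u v = \sum_u \sum_(v | e u v) F v u.
Proof.
rewrite (exchange_big_dep xpredT) //=; apply: eq_bigr => u _.
by apply: eq_bigl => v; rewrite esym.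
Qed.

Lemma sum_adj_sym (F : 'I_n -> 'I_n -> V) : (forall u v, F u v = F v u) ->
  \sum_u \sum_(v | e u v) F u v =
  (\sum_(u : 'I_n) \sum_(v : 'I_n | (u < v)%N && e u v) F u v) *+ 2.
Proof.
move=> Fsym.
have split_nbhd (u : 'I_n) : \sum_(v | e u v) F u v =
    \sum_(v : 'I_n | (u < v)%N && e u v) F u v +
    \sum_(v : 'I_n | (v < u)%N && e u v) F u v.
  rewrite (bigID (fun v : 'I_n => (u < v)%N)) /=.
  congr (_ + _); apply: eq_bigl => v; rewrite andbC //.
  by case: ltngtP => [//|//|/val_inj ->]; rewrite eirr.
rewrite (eq_bigr _ (fun u _ => split_nbhd u)) big_split /= mulr2n; congr (_ + _).
rewrite (exchange_big_dep xpredT) //=; apply: eq_bigr => u _.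
by apply: eq_big => [v|v _]; [rewrite esym | apply: Fsym].
Qed.

End SymmetricSums.

Section Bipartite.
Variables (n : nat) (e : rel 'I_n) (f : 'I_n -> bool).
Hypotheses (esym : symmetric e) (eirr : irreflexive e).
Hypothesis econ : connected_graph e.
Hypothesis fbip : forall u v, e u v -> f u != f v.

Lemma walk_parity k x y : walk e k x y -> f y = f x (+) odd k.
Proof.
elim: k x => [|k IHk] x /=; first by move/eqP->; rewrite addbF.
case/existsP=> z /andP [xz zy]; rewrite (IHk _ zy).
by move: (fbip xz); case: (f x); case: (f z); case: (odd k).
Qed.

Lemma dist_adj_neq w u v : e u v -> dist e w u != dist e w v.
Proof.
move=> uv; apply/eqP => dist_eq; move: (fbip uv).
by rewrite (walk_parity (walk_dist econ w u)) (walk_parity (walk_dist econ w v)) dist_eq eqxx.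
Qed.

Lemma nu_add u v : e u v -> nu e u v + nu e v u = n.
Proof.
move=> uv; rewrite /nu -[RHS]card_ord -(cardsC [set w | dist e w u < dist e w v]).
congr (_ + _); apply: eq_card => w.
by rewrite !inE -leqNgt ltn_neqAle eq_sym (dist_adj_neq w uv).
Qed.

Lemma deg_le_nu u v : e u v -> deg e u <= nu e u v.
Proof.
move=> uv; have card_swap : #|u |: ([set w | e u w] :\ v)| = deg e u.
  by rewrite cardsU1 /deg (cardsD1 v [set w | e u w]) !inE eirr uv andbF.
rewrite -card_swap; apply: subset_leq_card; apply/subsetP => w.
rewrite !inE => /predU1P [->|/andP [wv uw]]; first by rewrite dist_refl dist_adj.
have wu1 : dist e w u = 1 by rewrite dist_adj // esym.
have := dist_adj_neq w uv; rewrite wu1.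
have : dist e w v != 0 by rewrite dist_eq0.
by case: (dist e w v) => [|[|k]].
Qed.

Lemma nbhd_sub_opposite u : [set w | e u w] \subset [set w | f w != f u].
Proof. by apply/subsetP => w; rewrite !inE eq_sym => /fbip. Qed.

Lemma deg_le_opposite u : deg e u <= #|[set w | f w != f u]|.
Proof. exact: subset_leq_card (nbhd_sub_opposite u). Qed.

Local Notation A := [set u | f u].

Lemma degsum_le_sides : \sum_u deg e u <= 2 * (#|A| * #|~: A|).
Proof. by rewrite -sum_card_opposite; apply: leq_sum => u _; apply: deg_le_opposite. Qed.

Lemma card_side_le : #|A| <= n.
Proof. by have := max_card (mem A); rewrite card_ord. Qed.

Lemma card_sideC : #|~: A| = n - #|A|.
Proof. by rewrite cardsCs setCK card_ord. Qed.

Lemma degsum_le : \sum_u deg e u <= 2 * (n./2 * uphalf n).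
Proof.
apply: leq_trans degsum_le_sides _.
by rewrite leq_mul2l card_sideC mul_sub_le_half_uphalf ?orbT ?card_side_le.
Qed.

Lemma degsum_eq_sides_complete : \sum_u deg e u = 2 * (#|A| * #|~: A|) ->
  forall u v, e u v = (f u != f v).
Proof.
rewrite -sum_card_opposite => /eqP.
rewrite (leqif_sum (fun u _ => leqif_eq (deg_le_opposite u))) => /forallP deg_eq u v.
have card_eq : deg e u = #|[set w | f w != f u]| by apply/eqP/deg_eq.
have /(subset_cardP card_eq)/(_ v) := nbhd_sub_opposite u.
by rewrite !inE eq_sym.
Qed.

Lemma degsum_max_complete : \sum_u deg e u = 2 * (n./2 * uphalf n) ->
  is_complete_bipartite_half e.
Proof.
move=> degsum_max.
have sides_max : #|A| * (n - #|A|) = n./2 * uphalf n.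
  apply/eqP; rewrite eqn_leq mul_sub_le_half_uphalf ?card_side_le //=.
  by rewrite -(leq_pmul2l (isT : 0 < 2)) -degsum_max -card_sideC degsum_le_sides.
have e_A u v : e u v = ((u \in A) != (v \in A)).
  by rewrite !inE degsum_eq_sides_complete // degsum_max card_sideC sides_max.
have [cardA|cardA] := mul_sub_eq_half_uphalf card_side_le sides_max.
  by exists A.
exists (~: A); split; first by rewrite card_sideC cardA -{1}(half_add_uphalf n) addnK.
by move=> u v; rewrite e_A !in_setC; case: (u \in A); case: (v \in A).
Qed.

Section Complete.
Hypothesis e_f : forall x y, e x y = (f x != f y).

Lemma deg_complete u : deg e u = #|[set w | f w != f u]|.
Proof. by apply: eq_card => w; rewrite !inE e_f eq_sym. Qed.

Lemma degsum_complete : \sum_u deg e u = 2 * (#|A| * #|~: A|).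
Proof. by rewrite -sum_card_opposite; apply: eq_bigr => u _; apply: deg_complete. Qed.

Lemma nu_complete u v : e u v -> nu e u v = #|[set w | f w != f u]|.
Proof.
move=> uv; have opp_add : #|[set w | f w != f u]| + #|[set w | f w != f v]| = n.
  rewrite -[RHS]card_ord -(cardsC [set w | f w != f u]); congr (_ + _).
  by apply: eq_card => w; move: uv; rewrite !inE e_f; case: (f u); case: (f v); case: (f w).
have vu : e v u by rewrite esym.
have := deg_le_nu uv; have := deg_le_nu vu; have := nu_add uv.
by rewrite !deg_complete; lia.
Qed.

Lemma nu_mul_complete u v : e u v -> nu e u v * nu e v u = #|A| * #|~: A|.
Proof.
move=> uv; have vu : e v u by rewrite esym.
have opp_side x : #|[set w | f w != f x]| = if f x then #|~: A| else #|A|.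
  by case: (f x); apply: eq_card => w; rewrite !inE; case: (f w).
rewrite (nu_complete uv) (nu_complete vu) !opp_side.
by move: uv; rewrite e_f; case: (f u); case: (f v) => //= _; rewrite mulnC.
Qed.

End Complete.

Lemma two_vertices_complete : n = 2 -> is_complete_bipartite_half e.
Proof.
move=> n2; apply: degsum_max_complete; apply/eqP; rewrite eqn_leq degsum_le /=.
have -> : 2 * (n./2 * uphalf n) = \sum_(u : 'I_n) 1 by rewrite sum1_card card_ord n2.
by apply: leq_sum => u _; apply: deg_gt0; rewrite ?n2.
Qed.

Variable R : rcfType.
Local Open Scope ring_scope.

Definition ngg_term u v : R := (Num.sqrt ((nu e u v)%:R * (nu e v u)%:R))^-1.

Lemma NGG_sum_adj : NGG R e *+ 2 = \sum_u \sum_(v | e u v) ngg_term u v.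
Proof. by rewrite (sum_adj_sym esym eirr) // => u v; rewrite /ngg_term mulrC. Qed.

Lemma nu_gt0 u v : e u v -> (0 < nu e u v)%N.
Proof.
move=> uv; apply: leq_trans (deg_le_nu uv).
by apply/card_gt0P; exists v; rewrite inE.
Qed.

Lemma ngg_term_sqr u v : e u v ->
  ngg_term u v ^+ 2 = n%:R^-1 * ((nu e u v)%:R^-1 + (nu e v u)%:R^-1).
Proof.
move=> uv; rewrite /ngg_term exprVn sqr_sqrtr ?mulr_ge0 ?ler0n //.
have vu : e v u by rewrite esym.
have -> : n%:R = (nu e u v)%:R + (nu e v u)%:R :> R.
  by rewrite -natrD (nu_add uv).
have := nu_gt0 uv; have := nu_gt0 vu; rewrite -!(ltr0n R) => nu_vu_gt0 nu_uv_gt0.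
by field; rewrite !gt_eqF // addr_gt0.
Qed.

Lemma sum_inv_nu_le : \sum_u \sum_(v | e u v) ((nu e u v)%:R : R)^-1 <= n%:R.
Proof.
have -> : n%:R = \sum_(u : 'I_n) 1 :> R by rewrite sumr_const card_ord.
apply: ler_sum => u _.
apply: le_trans (_ : \sum_(v | e u v) (deg e u)%:R^-1 <= 1).
  apply: ler_sum => v uv; rewrite lef_pV2 ?posrE ?ltr0n ?nu_gt0 ?ler_nat //.
    exact: deg_le_nu uv.
  by apply/card_gt0P; exists v; rewrite inE.
rewrite sum_nbhd_const -[_^-1 *+ _]mulr_natl.
have [->|deg_neq0] := eqVneq (deg e u) 0%N; first by rewrite mul0r.
by rewrite mulfV ?pnatr_eq0.
Qed.

Lemma sum_ngg_term_sqr_le : \sum_u \sum_(v | e u v) ngg_term u v ^+ 2 <= 2.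
Proof.
under eq_bigr do under eq_bigr => v uv do rewrite (ngg_term_sqr uv).
under eq_bigr do rewrite -mulr_sumr big_split /=.
rewrite -mulr_sumr big_split /=.
have -> : \sum_u \sum_(v | e u v) ((nu e v u)%:R : R)^-1 =
          \sum_u \sum_(v | e u v) ((nu e u v)%:R : R)^-1 by rewrite sum_adj_swap.
have [->|n_neq0] := eqVneq (n%:R : R) 0; first by rewrite invr0 mul0r ler0n.
have inv_n : n%:R^-1 * n%:R = 1 :> R by rewrite mulVf.
have := sum_inv_nu_le; have : 0 <= n%:R^-1 :> R by rewrite invr_ge0 ler0n.
nra.
Qed.

Lemma NGG_AMGM (c : R) : 4 * c * NGG R e <= 2 * c ^+ 2 + (\sum_u deg e u)%:R.
Proof.
have term_le u v : 2 * c * ngg_term u v <= c ^+ 2 * ngg_term u v ^+ 2 + 1.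
  by have := sqr_ge0 (c * ngg_term u v - 1); rewrite !expr2; nra.
have -> : 4 * c * NGG R e = 2 * c * (NGG R e *+ 2) by rewrite mulr2n; ring.
rewrite NGG_sum_adj mulr_sumr.
under [X in X <= _]eq_bigr do rewrite mulr_sumr.
apply: le_trans (ler_sum _ (fun u _ => ler_sum _ (fun v _ => term_le u v))) _.
under [X in X <= _]eq_bigr do rewrite big_split /= -mulr_sumr sum_nbhd_const.
rewrite big_split /= -mulr_sumr natr_sum lerD2r mulrC ler_wpM2r ?sqr_ge0 //.
exact: sum_ngg_term_sqr_le.
Qed.

Local Notation c := (Num.sqrt ((n./2)%:R * (uphalf n)%:R) : R).

Lemma sqr_sqrt_half_uphalf : c ^+ 2 = (n./2)%:R * (uphalf n)%:R.
Proof. by rewrite sqr_sqrtr // mulr_ge0. Qed.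

Lemma NGG_eq_max_complete : NGG R e = c -> is_complete_bipartite_half e.
Proof.
move=> NGG_eq; apply: degsum_max_complete; apply/eqP; rewrite eqn_leq degsum_le /=.
rewrite -(ler_nat R) !natrM -sqr_sqrt_half_uphalf.
by have := NGG_AMGM c; rewrite NGG_eq expr2; lra.
Qed.

Hypothesis n_gt1 : (1 < n)%N.

Lemma NGG_le : NGG R e <= c.
Proof.
have c_gt0 := sqrt_half_uphalf_gt0 R n_gt1.
have degsum_le_c : (\sum_u deg e u)%:R <= 2 * c ^+ 2.
  by rewrite sqr_sqrt_half_uphalf -!natrM ler_nat degsum_le.
have amgm := NGG_AMGM c.
rewrite -(ler_pM2l (_ : 0 < 4 * c)) ?mulr_gt0 //.
by rewrite expr2 in degsum_le_c amgm; lra.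
Qed.

Lemma NGG_complete : (forall x y, e x y = (f x != f y)) -> #|A| = n./2 ->
  NGG R e = c.
Proof.
move=> e_f cardA.
have c_neq0 : c != 0 by rewrite gt_eqF // sqrt_half_uphalf_gt0.
have cardAC : #|~: A| = uphalf n.
  by rewrite card_sideC cardA -{1}(half_add_uphalf n) addKn.
have term_c u v : e u v -> ngg_term u v = c^-1.
  by move=> uv; rewrite /ngg_term -natrM (nu_mul_complete e_f uv) cardA cardAC natrM.
apply/eqP; rewrite -[_ == _]orFb -(eqrMn2r 2); apply/eqP; rewrite NGG_sum_adj.
under eq_bigr do rewrite (eq_bigr _ (term_c _)) sum_nbhd_const.
rewrite sumrMnr degsum_complete // cardA cardAC.
rewrite -[c^-1 *+ _]mulr_natr -[c *+ 2]mulr_natr !natrM.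
by rewrite -[X in 2 * X]sqr_sqrt_half_uphalf; field.
Qed.

Lemma GG_NGG : GG R e = Num.sqrt (n - 2)%:R * NGG R e.
Proof.
rewrite /GG /NGG mulr_sumr; apply: eq_bigr => u _; rewrite mulr_sumr.
apply: eq_bigr => v /andP [_ uv].
rewrite -natrD (nu_add uv) -natrB; last exact: leq_trans n_gt1.
by rewrite [LHS]sqrtrM ?ler0n // sqrtrV // mulr_ge0.
Qed.

End Bipartite.

Local Open Scope ring_scope.

Lemma NGG_max_bipartite (R : rcfType) n (e : rel 'I_n) : (1 < n)%N ->
  simple_graph e -> connected_graph e -> bipartite_graph e ->
  NGG R e <= Num.sqrt ((n./2)%:R * (uphalf n)%:R) /\
  (NGG R e = Num.sqrt ((n./2)%:R * (uphalf n)%:R) <-> is_complete_bipartite_half e).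
Proof.
move=> n_gt1 [esym eirr] econ [f fbip].
split; first exact: NGG_le esym eirr econ fbip R n_gt1.
split; first exact: NGG_eq_max_complete esym eirr econ fbip R.
move=> [A [cardA e_A]]; have fbipA u v : e u v -> (u \in A) != (v \in A) by rewrite e_A.
apply: (NGG_complete (f := mem A)) => //.
by rewrite -cardA; apply: eq_card => u; rewrite inE.
Qed.

Lemma GG_max_bipartite (R : rcfType) n (e : rel 'I_n) : (1 < n)%N ->
  simple_graph e -> connected_graph e -> bipartite_graph e ->
  GG R e <= Num.sqrt ((n - 2)%:R * (n./2)%:R * (uphalf n)%:R) /\
  (GG R e = Num.sqrt ((n - 2)%:R * (n./2)%:R * (uphalf n)%:R) <->
     is_complete_bipartite_half e).
Proof.
move=> n_gt1 e_simple econ e_bip.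
have [NGG_le_max NGG_max_iff] := NGG_max_bipartite R n_gt1 e_simple econ e_bip.
have [[esym eirr] [f fbip]] := (e_simple, e_bip).
rewrite (GG_NGG econ fbip R n_gt1) -mulrA sqrtrM ?ler0n //.
split; first by rewrite ler_wpM2l ?sqrtr_ge0.
(* For n = 2 both sides vanish; the only connected graph on two vertices is K_{1,1}. *)
have [n2|n_neq2] := eqVneq n 2.
  have -> : (n - 2)%:R = 0 :> R by rewrite n2.
  by rewrite sqrtr0 !mul0r; split=> // _; apply: two_vertices_complete fbip n2.
have sqrt_neq0 : Num.sqrt (n - 2)%:R != 0 :> R.
  by rewrite sqrtr_eq0 -ltNge ltr0n subn_gt0 ltn_neqAle eq_sym n_neq2.
by rewrite -NGG_max_iff; split=> [/(mulfI sqrt_neq0)|->].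
Qed.

Theorem corollary6 (R : rcfType) (n : nat) (hn : (2 <= n)%N) :
  (forall e : rel 'I_n,
     simple_graph e -> connected_graph e -> bipartite_graph e ->
     NGG R e <= Num.sqrt ((n./2)%:R * (uphalf n)%:R) /\
     (NGG R e = Num.sqrt ((n./2)%:R * (uphalf n)%:R) <->
        is_complete_bipartite_half e)) /\
  (forall e : rel 'I_n,
     simple_graph e -> connected_graph e -> bipartite_graph e ->
     GG R e <= Num.sqrt ((n - 2)%:R * (n./2)%:R * (uphalf n)%:R) /\
     (GG R e = Num.sqrt ((n - 2)%:R * (n./2)%:R * (uphalf n)%:R) <->
        is_complete_bipartite_half e)).
Proof.
by split=> e; [apply: NGG_max_bipartite | apply: GG_max_bipartite].
Qed.
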